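(* Let \(X\) be a nonempty set and let \(\Phi\) be a mapping with domain \(X^{2}\). Then the following conditions are equivalent. (i) \(\Phi\) is combinatorially similar to a pseudoultrametric. (ii) There is \(b_0 \in \Phi(X^{2})\) such that \(\Phi(x,x) = b_0\) for every \(x \in X\), the binary relation \(\preccurlyeq_{\Phi} := u_{\Phi}^{t} \cup \Delta_{\Phi(X^{2})}\) is a partial order on \(\Phi(X^{2})\), \(b_0\) is the smallest element of \((\Phi(X^{2}), \preccurlyeq_{\Phi})\), \(\Phi\) is a \(\preccurlyeq_{\Phi}\)-pseudoultrametric on \(X\), and there is a linear order \(\preccurlyeq\) on \(\Phi(X^{2})\) such that \(\preccurlyeq_{\Phi} \subseteq \preccurlyeq\) and \((\Phi(X^{2}), \preccurlyeq)\) is order-isomorphic to a subposet of \(([0,\infty), \leqslant)\). (iii) \(\Phi\) is symmetric, there is \(a_0 \in \Phi(X^{2})\) for which \(\Phi\) is \(a_0\)-coherent, for every triple \(\langle x_1, x_2, x_3\rangle\) of points of \(X\) there is a permutation \((i_1,i_2,i_3)\) of \((1,2,3)\) such that \(\Phi(x_{i_1}, x_{i_2}) = \Phi(x_{i_2}, x_{i_3})\), and there is a linear order \(\preccurlyeq\) on \(\Phi(X^{2})\) such that \(a_0\) is the smallest element of \((\Phi(X^{2}), \preccurlyeq)\), \(u_{\Phi} \subseteq \preccurlyeq\), and \((\Phi(X^{2}), \preccurlyeq)\) is order-isomorphic to a subposet of \(([0,\infty), \leqslant)\).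
   Context: For a mapping \(F\) with domain \(A\), \(F(A)\) denotes its range; \(\Delta_S=\{\langle s,s\rangle:s\in S\}\). A pseudoultrametric on a set \(Z\) is a symmetric \(d\colon Z^2\to[0,\infty)\) with \(d(z,z)=0\) and \(d(x,y)\le\max\{d(x,z),d(z,y)\}\). For a poset \((Q,\preccurlyeq_Q)\) with smallest element \(q_0\), a mapping \(d\colon Z^2\to Q\) is a \(\preccurlyeq_Q\)-pseudoultrametric if \(d\) is symmetric, \(d(z,z)=q_0\) for all \(z\), and for every triple \(\langle z_1,z_2,z_3\rangle\) in \(Z\) there is a permutation \((i_1,i_2,i_3)\) of \((1,2,3)\) with \(d(z_{i_1},z_{i_3})\preccurlyeq_Q d(z_{i_1},z_{i_2})=d(z_{i_2},z_{i_3})\). For nonempty sets \(X,Y\) and mappings \(\Phi\) with domain \(X^2\), \(\Psi\) with domain \(Y^2\), \(\Phi\) is combinatorially similar to \(\Psi\) if there are bijections \(f\colon \Phi(X^2)\to\Psi(Y^2)\) and \(g\colon Y\to X\) with \(\Psi(x,y)=f(\Phi(g(x),g(y)))\) for all \(x,y\in Y\). \(\Phi\) is strongly consistent with an equivalence relation \(R\) on \(X\) if \(\langle x_1,x_2\rangle,\langle x_3,x_4\rangle\in R\) imply \(\Phi(x_1,x_3)=\Phi(x_2,x_4)\); \(\Phi\) is \(a_0\)-coherent (\(a_0\in\Phi(X^2)\)) if \(\Phi^{-1}(a_0)\) is an equivalence relation on \(X\) and \(\Phi\) is strongly consistent with it. For \(Y=\Phi(X^2)\), \(\langle y_1,y_2\rangle\in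 u_\Phi\) iff \(y_1,y_2\in Y\) and there are \(x_1,x_2,x_3\in X\) with \(y_1=\Phi(x_1,x_3)\), \(y_2=\Phi(x_1,x_2)=\Phi(x_2,x_3)\). The transitive closure is \(\gamma^t=\bigcup_{n\ge1}\gamma^n\), \(\gamma^{n+1}=\gamma^n\circ\gamma\), with \(\langle x,y\rangle\in\alpha\circ\beta\) iff \(\exists z\): \(\langle x,z\rangle\in\alpha\), \(\langle z,y\rangle\in\beta\). *)

From Stdlib Require Import Reals Relations.
Open Scope R_scope.

Section Defs.
Context {X Y : Type}.

Definition rng {A B : Type} (Phi : A -> A -> B) (y : B) : Prop :=
  exists x1 x2, Phi x1 x2 = y.

Definition some_perm {Z : Type} (P : Z -> Z -> Z -> Prop) (z1 z2 z3 : Z) : Prop :=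
  P z1 z2 z3 \/ P z1 z3 z2 \/ P z2 z1 z3 \/ P z2 z3 z1 \/ P z3 z1 z2 \/ P z3 z2 z1.

Definition symmetric_map {Z W : Type} (d : Z -> Z -> W) : Prop :=
  forall x y, d x y = d y x.

Definition bijective_map {A B : Type} (g : A -> B) : Prop :=
  (forall a1 a2, g a1 = g a2 -> a1 = a2) /\ (forall b, exists a, g a = b).

Definition partial_order_on {T : Type} (A : T -> Prop) (r : T -> T -> Prop) : Prop :=
  (forall a b, r a b -> A a /\ A b) /\
  (forall a, A a -> r a a) /\
  (forall a b, r a b -> r b a -> a = b) /\
  (forall a b c, r a b -> r b c -> r a c).

Definition linear_order_on {T : Type} (A : T -> Prop) (r : T -> T -> Prop) : Prop :=
  partial_order_on A r /\ (forall a b, A a -> A b -> r a b \/ r b a).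

Definition smallest_of {T : Type} (A : T -> Prop) (r : T -> T -> Prop) (t : T) : Prop :=
  A t /\ forall a, A a -> r t a.

Definition embeds_in_nonneg_reals {T : Type} (A : T -> Prop) (r : T -> T -> Prop) : Prop :=
  exists h : T -> R,
    (forall a, A a -> 0 <= h a) /\
    (forall a b, A a -> A b -> h a = h b -> a = b) /\
    (forall a b, A a -> A b -> (r a b <-> h a <= h b)).

Definition pseudoultrametric {Z : Type} (d : Z -> Z -> R) : Prop :=
  (forall x y, 0 <= d x y) /\ symmetric_map d /\ (forall z, d z z = 0) /\
  (forall x y z, d x y <= Rmax (d x z) (d z y)).

Definition comb_similar {Z W : Type} (Phi : X -> X -> Y) (Psi : Z -> Z -> W) : Prop :=
  exists (f : Y -> W) (g : Z -> X),
    (forall y, rng Phi y -> rng Psi (f y)) /\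
    (forall y1 y2, rng Phi y1 -> rng Phi y2 -> f y1 = f y2 -> y1 = y2) /\
    (forall w, rng Psi w -> exists y, rng Phi y /\ f y = w) /\
    bijective_map g /\
    (forall x y, Psi x y = f (Phi (g x) (g y))).

Definition comb_similar_to_pum (Phi : X -> X -> Y) : Prop :=
  exists (Z : Type) (d : Z -> Z -> R), pseudoultrametric d /\ comb_similar Phi d.

Definition u_rel (Phi : X -> X -> Y) (y1 y2 : Y) : Prop :=
  rng Phi y1 /\ rng Phi y2 /\
  exists x1 x2 x3, y1 = Phi x1 x3 /\ y2 = Phi x1 x2 /\ y2 = Phi x2 x3.

Definition preceq_Phi (Phi : X -> X -> Y) (y1 y2 : Y) : Prop :=
  clos_trans Y (u_rel Phi) y1 y2 \/ (rng Phi y1 /\ y1 = y2).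

Definition Q_pseudoultrametric {Z Q : Type} (le : Q -> Q -> Prop) (q0 : Q)
    (d : Z -> Z -> Q) : Prop :=
  symmetric_map d /\ (forall z, d z z = q0) /\
  (forall z1 z2 z3,
     some_perm (fun a b c => le (d a c) (d a b) /\ d a b = d b c) z1 z2 z3).

Definition coherent (Phi : X -> X -> Y) (a0 : Y) : Prop :=
  (forall x, Phi x x = a0) /\
  (forall x y, Phi x y = a0 -> Phi y x = a0) /\
  (forall x y z, Phi x y = a0 -> Phi y z = a0 -> Phi x z = a0) /\
  (forall x1 x2 x3 x4, Phi x1 x2 = a0 -> Phi x3 x4 = a0 -> Phi x1 x3 = Phi x2 x4).

End Defs.

(* All three conditions reduce to one: there is h : Phi(X^2) -> R, injective on
   the range, such that h o Phi is a pseudoultrametric (then Phi is similar to it,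
   and conversely the similarity's value map is such an h).  From such an h, the
   isosceles property of ultrametric triangles gives the permutation conditions and
   u_Phi-monotonicity of h, and pulling back <= along h gives the linear order.
   Conversely, the real embedding hh of a linear order with least element b0,
   shifted to hh - hh b0, turns the isosceles condition back into the strong
   triangle inequality. *)

From Stdlib Require Import Reals Relations Lra.
Open Scope R_scope.

Lemma some_perm_impl {Z : Type} (P Q : Z -> Z -> Z -> Prop) z1 z2 z3 :
  (forall a b c, P a b c -> Q a b c) -> some_perm P z1 z2 z3 -> some_perm Q z1 z2 z3.
Proof. unfold some_perm; intros H; intuition. Qed.

Lemma rng_app {A B : Type} (Phi : A -> A -> B) a b : rng Phi (Phi a b).
Proof. exists a, b; reflexivity. Qed.

Definition injective_on {T U : Type} (A : T -> Prop) (h : T -> U) : Prop :=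
  forall a b, A a -> A b -> h a = h b -> a = b.

Definition strong_triangle {Z : Type} (d : Z -> Z -> R) : Prop :=
  forall x y z, d x y <= Rmax (d x z) (d z y).

Section StrongTriangle.
Context {Z : Type} (d : Z -> Z -> R).
Hypothesis d_sym : symmetric_map d.

Lemma strong_triangle_isosceles : strong_triangle d ->
  forall z1 z2 z3, some_perm (fun a b c => d a c <= d a b /\ d a b = d b c) z1 z2 z3.
Proof.
  intros Hu z1 z2 z3; unfold some_perm.
  pose proof (Hu z1 z3 z2); pose proof (Hu z1 z2 z3); pose proof (Hu z2 z3 z1).
  pose proof (d_sym z3 z2); pose proof (d_sym z2 z1); pose proof (d_sym z3 z1).
  unfold Rmax in *.
  repeat match goal with H : context [Rle_dec ?a ?b] |- _ =>
    destruct (Rle_dec a b) end; try lra;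
  first [ left; split; lra | right; left; split; lra | right; right; left; split; lra ].
Qed.

Lemma isosceles_strong_triangle :
  (forall z1 z2 z3, some_perm (fun a b c => d a c <= d a b /\ d a b = d b c) z1 z2 z3) ->
  strong_triangle d.
Proof.
  intros H x y z.
  pose proof (d_sym x y); pose proof (d_sym x z); pose proof (d_sym y z).
  destruct (H x y z) as [?|[?|[?|[?|[?|?]]]]]; unfold Rmax;
  destruct (Rle_dec (d x z) (d z y)); lra.
Qed.

End StrongTriangle.

Section Pseudoultrametric.
Context {Z : Type} (d : Z -> Z -> R).
Hypothesis d_pum : pseudoultrametric d.

Lemma pum_le_of_eq a b c : d a b = d b c -> d a c <= d a b.
Proof.
  destruct d_pum as [_ [_ [_ Hu]]]; intros E.
  specialize (Hu a c b); rewrite <- E in Hu; unfold Rmax in Hu.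
  destruct Rle_dec; lra.
Qed.

Lemma pum_zero_trans x y z : d x y = 0 -> d y z = 0 -> d x z = 0.
Proof.
  destruct d_pum as [Hn [_ [_ Hu]]]; intros E1 E2.
  specialize (Hu x z y); specialize (Hn x z); rewrite E1, E2, Rmax_left in Hu; lra.
Qed.

Lemma pum_zero_congr x1 x2 x3 x4 : d x1 x2 = 0 -> d x3 x4 = 0 -> d x1 x3 = d x2 x4.
Proof.
  destruct d_pum as [Hn [Hs [_ Hu]]]; intros E1 E2.
  assert (F : forall a b c e, d a b = 0 -> d c e = 0 -> d a c <= d b e).
  { clear x1 x2 x3 x4 E1 E2; intros a b c e Eab Ece.
    pose proof (Hu a c b) as U1; pose proof (Hu b c e) as U2.
    rewrite Eab, Rmax_right in U1 by apply Hn.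
    rewrite (Hs e c), Ece, Rmax_left in U2 by apply Hn.
    lra. }
  apply Rle_antisym; apply F; try assumption; rewrite Hs; assumption.
Qed.

End Pseudoultrametric.

Definition pullback_le {T : Type} (A : T -> Prop) (h : T -> R) (a b : T) : Prop :=
  A a /\ A b /\ h a <= h b.

Section Pullback.
Context {T : Type} (A : T -> Prop) (h : T -> R).
Hypothesis h_inj : injective_on A h.

Lemma pullback_le_linear : linear_order_on A (pullback_le A h).
Proof.
  unfold pullback_le; split; [split; [|split; [|split]]|].
  - intros a b [? [? _]]; split; assumption.
  - intros a ?; repeat split; auto; lra.
  - intros a b [? [? ?]] [_ [_ ?]]; apply h_inj; auto; lra.
  - intros a b c [? [_ ?]] [_ [? ?]]; repeat split; auto; lra.
  - intros a b Ha Hb; destruct (Rle_dec (h a) (h b)); [left|right];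
      repeat split; auto; lra.
Qed.

Lemma pullback_le_embeds :
  (forall a, A a -> 0 <= h a) -> embeds_in_nonneg_reals A (pullback_le A h).
Proof.
  intros Hnn; exists h; unfold pullback_le; split; [exact Hnn|split].
  - exact h_inj.
  - intros a b Ha Hb; split; [intros [_ [_ ?]]; assumption | auto].
Qed.

End Pullback.

Section Relations.
Context {X Y : Type} (Phi : X -> X -> Y).

Lemma u_rel_intro a b c : Phi a b = Phi b c -> u_rel Phi (Phi a c) (Phi a b).
Proof. intros E; repeat split; try apply rng_app; exists a, b, c; auto. Qed.

Lemma clos_trans_u_rel_rng y1 y2 :
  clos_trans Y (u_rel Phi) y1 y2 -> rng Phi y1 /\ rng Phi y2.
Proof. induction 1 as [a b [? [? _]]|a b c _ [? _] _ [_ ?]]; auto. Qed.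

Lemma preceq_Phi_rng y1 y2 : preceq_Phi Phi y1 y2 -> rng Phi y1 /\ rng Phi y2.
Proof.
  intros [C|[Hr <-]]; [exact (clos_trans_u_rel_rng _ _ C) | auto].
Qed.

Lemma preceq_Phi_trans y1 y2 y3 :
  preceq_Phi Phi y1 y2 -> preceq_Phi Phi y2 y3 -> preceq_Phi Phi y1 y3.
Proof.
  intros [C1|[? <-]] [C2|[? <-]]; try (left; assumption).
  - left; exact (t_trans _ _ _ _ _ C1 C2).
  - right; auto.
Qed.

End Relations.

Definition pum_encoding {X Y : Type} (Phi : X -> X -> Y) (h : Y -> R) : Prop :=
  injective_on (rng Phi) h /\ pseudoultrametric (fun x y => h (Phi x y)).

Lemma comb_similar_to_pum_iff_encoding {X Y : Type} (Phi : X -> X -> Y) :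
  comb_similar_to_pum Phi <-> exists h, pum_encoding Phi h.
Proof.
  split.
  - intros [Z [d [[Hn [Hs [Hz Hu]]] [f [g [_ [Hf [_ [[_ Gs] Hfg]]]]]]]]].
    exists f; split; [exact Hf|].
    repeat split.
    + intros x y; destruct (Gs x) as [a <-], (Gs y) as [b <-].
      rewrite <- Hfg; apply Hn.
    + intros x y; destruct (Gs x) as [a <-], (Gs y) as [b <-].
      rewrite <- !Hfg; apply Hs.
    + intros x; destruct (Gs x) as [a <-]; rewrite <- Hfg; apply Hz.
    + intros x y z; destruct (Gs x) as [a <-], (Gs y) as [b <-], (Gs z) as [c <-].
      rewrite <- !Hfg; apply Hu.
  - intros [h [Hi Hp]]; exists X, (fun x y => h (Phi x y)); split; [exact Hp|].
    exists h, (fun x => x); repeat split.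
    + intros y [a [b <-]]; exact (rng_app (fun x y => h (Phi x y)) a b).
    + exact Hi.
    + intros w [a [b <-]]; exists (Phi a b); split; [apply rng_app | reflexivity].
    + intros a1 a2 E; exact E.
    + intros b; exists b; reflexivity.
Qed.

Definition condition_ii {X Y : Type} (Phi : X -> X -> Y) : Prop :=
  exists b0 : Y, rng Phi b0 /\ (forall x, Phi x x = b0) /\
    partial_order_on (rng Phi) (preceq_Phi Phi) /\
    smallest_of (rng Phi) (preceq_Phi Phi) b0 /\
    Q_pseudoultrametric (preceq_Phi Phi) b0 Phi /\
    exists le : Y -> Y -> Prop,
      linear_order_on (rng Phi) le /\
      (forall y1 y2, preceq_Phi Phi y1 y2 -> le y1 y2) /\
      embeds_in_nonneg_reals (rng Phi) le.

Definition condition_iii {X Y : Type} (Phi : X -> X -> Y) : Prop :=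
  symmetric_map Phi /\
  exists a0 : Y, rng Phi a0 /\ coherent Phi a0 /\
    (forall x1 x2 x3, some_perm (fun a b c => Phi a b = Phi b c) x1 x2 x3) /\
    exists le : Y -> Y -> Prop,
      linear_order_on (rng Phi) le /\
      smallest_of (rng Phi) le a0 /\
      (forall y1 y2, u_rel Phi y1 y2 -> le y1 y2) /\
      embeds_in_nonneg_reals (rng Phi) le.

Section Encoding.
Context {X Y : Type} (Phi : X -> X -> Y) (h : Y -> R).
Hypothesis h_inj : injective_on (rng Phi) h.
Hypothesis h_pum : pseudoultrametric (fun x y => h (Phi x y)).

Let d x y := h (Phi x y).

Lemma encoding_eq a b c e : h (Phi a b) = h (Phi c e) -> Phi a b = Phi c e.
Proof. apply h_inj; apply rng_app. Qed.

Lemma encoding_symmetric : symmetric_map Phi.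
Proof. intros x y; apply encoding_eq, (proj1 (proj2 h_pum)). Qed.

Lemma encoding_diag x y : Phi x x = Phi y y.
Proof. apply encoding_eq; rewrite !(proj1 (proj2 (proj2 h_pum))); reflexivity. Qed.

Lemma encoding_nonneg y : rng Phi y -> 0 <= h y.
Proof. intros [a [b <-]]; apply (proj1 h_pum). Qed.

Lemma encoding_isosceles x1 x2 x3 :
  some_perm (fun a b c => Phi a b = Phi b c) x1 x2 x3.
Proof.
  refine (some_perm_impl _ _ _ _ _ _
            (strong_triangle_isosceles d (proj1 (proj2 h_pum))
               (proj2 (proj2 (proj2 h_pum))) x1 x2 x3)).
  intros a b c [_ E]; exact (encoding_eq _ _ _ _ E).
Qed.

Lemma u_rel_encoding_le y1 y2 : u_rel Phi y1 y2 -> h y1 <= h y2.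
Proof.
  intros [_ [_ [a [b [c [-> [-> E]]]]]]].
  apply (pum_le_of_eq d h_pum); unfold d; rewrite <- E; reflexivity.
Qed.

Lemma preceq_Phi_encoding_le y1 y2 : preceq_Phi Phi y1 y2 -> h y1 <= h y2.
Proof.
  intros [C|[_ <-]]; [|lra].
  induction C as [a b U|a b c _ IH1 _ IH2]; [exact (u_rel_encoding_le _ _ U) | lra].
Qed.

Lemma encoding_coherent x0 : coherent Phi (Phi x0 x0).
Proof.
  assert (zero : forall x y, Phi x y = Phi x0 x0 <-> d x y = 0).
  { intros x y; unfold d; rewrite <- (proj1 (proj2 (proj2 h_pum)) x0).
    split; [intros ->; reflexivity | apply encoding_eq]. }
  repeat split.
  - intros x; apply encoding_diag.
  - intros x y E; rewrite encoding_symmetric; exact E.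
  - intros x y z E1 E2; apply zero; apply zero in E1, E2.
    exact (pum_zero_trans d h_pum _ _ _ E1 E2).
  - intros x1 x2 x3 x4 E1 E2; apply zero in E1, E2.
    exact (encoding_eq _ _ _ _ (pum_zero_congr d h_pum _ _ _ _ E1 E2)).
Qed.

Lemma encoding_condition_ii (x0 : X) : condition_ii Phi.
Proof.
  exists (Phi x0 x0); split; [apply rng_app|].
  split; [intros x; apply encoding_diag|].
  split; [|split; [|split]].
  - split; [|split; [|split]].
    + exact (preceq_Phi_rng Phi).
    + intros y Hy; right; auto.
    + intros y1 y2 H12 H21.
      destruct (preceq_Phi_rng Phi _ _ H12).
      apply h_inj; auto.
      apply Rle_antisym; apply preceq_Phi_encoding_le; assumption.
    + exact (preceq_Phi_trans Phi).
  - split; [apply rng_app|].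
    intros y [p [q <-]]; left; apply t_step.
    rewrite (encoding_diag x0 p); apply u_rel_intro, encoding_symmetric.
  - split; [exact encoding_symmetric|split; [intros x; apply encoding_diag|]].
    intros z1 z2 z3; apply (some_perm_impl _ _ _ _ _ (fun a b c E => conj
      (or_introl (t_step _ _ _ _ (u_rel_intro Phi a b c E))) E)).
    apply encoding_isosceles.
  - exists (pullback_le (rng Phi) h).
    split; [exact (pullback_le_linear (rng Phi) h h_inj)|split].
    + intros y1 y2 H; destruct (preceq_Phi_rng Phi _ _ H).
      repeat split; auto; apply preceq_Phi_encoding_le; assumption.
    + exact (pullback_le_embeds (rng Phi) h h_inj encoding_nonneg).
Qed.

Lemma encoding_condition_iii (x0 : X) : condition_iii Phi.
Proof.
  split; [exact encoding_symmetric|].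
  exists (Phi x0 x0); split; [apply rng_app|].
  split; [exact (encoding_coherent x0)|split; [exact encoding_isosceles|]].
  exists (pullback_le (rng Phi) h).
  split; [exact (pullback_le_linear (rng Phi) h h_inj)|split; [|split]].
  - split; [apply rng_app|].
    intros y Hy; repeat split; auto; [apply rng_app|].
    rewrite (proj1 (proj2 (proj2 h_pum))); apply encoding_nonneg; exact Hy.
  - intros y1 y2 U; pose proof (u_rel_encoding_le _ _ U) as L.
    destruct U as [? [? _]]; repeat split; assumption.
  - exact (pullback_le_embeds (rng Phi) h h_inj encoding_nonneg).
Qed.

End Encoding.

Section FromLinearOrder.
Context {X Y : Type} (Phi : X -> X -> Y) (b0 : Y) (le : Y -> Y -> Prop).
Hypothesis Phi_sym : symmetric_map Phi.
Hypothesis Phi_diag : forall x, Phi x x = b0.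
Hypothesis b0_least : smallest_of (rng Phi) le b0.
Hypothesis le_embeds : embeds_in_nonneg_reals (rng Phi) le.

Lemma isosceles_encoding :
  (forall x1 x2 x3,
     some_perm (fun a b c => le (Phi a c) (Phi a b) /\ Phi a b = Phi b c) x1 x2 x3) ->
  exists h, pum_encoding Phi h.
Proof.
  intros Hiso; destruct b0_least as [Rb least], le_embeds as [hh [_ [Hinj Hmon]]].
  exists (fun y => hh y - hh b0); split.
  - intros y1 y2 r1 r2 E; apply Hinj; auto; lra.
  - assert (S : symmetric_map (fun x y => hh (Phi x y) - hh b0)).
    { intros x y; rewrite Phi_sym; reflexivity. }
    repeat split.
    + intros x y; pose proof (least _ (rng_app Phi x y)) as L.
      apply Hmon in L; [lra | exact Rb | apply rng_app].
    + exact S.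
    + intros z; rewrite Phi_diag; lra.
    + apply isosceles_strong_triangle; [exact S|].
      intros x1 x2 x3; refine (some_perm_impl _ _ _ _ _ _ (Hiso x1 x2 x3)).
      intros a b c [L E]; apply Hmon in L; try apply rng_app.
      rewrite E; split; [rewrite <- E|]; lra.
Qed.

End FromLinearOrder.

Lemma condition_ii_encoding {X Y : Type} (Phi : X -> X -> Y) :
  condition_ii Phi -> exists h, pum_encoding Phi h.
Proof.
  intros [b0 [_ [Dg [_ [Sm [[Sy [_ Iso]] [le [_ [Inc Emb]]]]]]]]].
  apply (isosceles_encoding Phi b0 le Sy Dg).
  - split; [exact (proj1 Sm)|]; intros y Hy; apply Inc, (proj2 Sm), Hy.
  - exact Emb.
  - intros x1 x2 x3; refine (some_perm_impl _ _ _ _ _ _ (Iso x1 x2 x3)).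
    intros a b c [L E]; auto.
Qed.

Lemma condition_iii_encoding {X Y : Type} (Phi : X -> X -> Y) :
  condition_iii Phi -> exists h, pum_encoding Phi h.
Proof.
  intros [Sy [a0 [_ [[Dg _] [Iso [le [_ [Sm [Inc Emb]]]]]]]]].
  apply (isosceles_encoding Phi a0 le Sy Dg Sm Emb).
  intros x1 x2 x3; refine (some_perm_impl _ _ _ _ _ _ (Iso x1 x2 x3)).
  intros a b c E; split; [apply Inc, u_rel_intro|]; exact E.
Qed.

Theorem theorem4p21 (X Y : Type) (x0 : X) (Phi : X -> X -> Y) :
  (comb_similar_to_pum Phi <->
   (exists b0 : Y, rng Phi b0 /\ (forall x, Phi x x = b0) /\
      partial_order_on (rng Phi) (preceq_Phi Phi) /\
      smallest_of (rng Phi) (preceq_Phi Phi) b0 /\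
      Q_pseudoultrametric (preceq_Phi Phi) b0 Phi /\
      exists le : Y -> Y -> Prop,
        linear_order_on (rng Phi) le /\
        (forall y1 y2, preceq_Phi Phi y1 y2 -> le y1 y2) /\
        embeds_in_nonneg_reals (rng Phi) le))
  /\
  (comb_similar_to_pum Phi <->
   (symmetric_map Phi /\
    exists a0 : Y, rng Phi a0 /\ coherent Phi a0 /\
      (forall x1 x2 x3,
         some_perm (fun a b c => Phi a b = Phi b c) x1 x2 x3) /\
      exists le : Y -> Y -> Prop,
        linear_order_on (rng Phi) le /\
        smallest_of (rng Phi) le a0 /\
        (forall y1 y2, u_rel Phi y1 y2 -> le y1 y2) /\
        embeds_in_nonneg_reals (rng Phi) le)).
Proof.
  fold (condition_ii Phi) (condition_iii Phi).
  rewrite comb_similar_to_pum_iff_encoding.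
  split; split.
  - intros [h [Hi Hp]]; exact (encoding_condition_ii Phi h Hi Hp x0).
  - apply condition_ii_encoding.
  - intros [h [Hi Hp]]; exact (encoding_condition_iii Phi h Hi Hp x0).
  - apply condition_iii_encoding.
Qed.
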